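(* Let $P$ be the Borel probability measure on $\mathbb{R}$ with density $f(x)=(3/2)^n$ if $x\in J_n:=[1-\frac{1}{3^{n-1}},1-\frac{2}{3^n}]$ for some $n\in\mathbb{N}$, and $f(x)=0$ otherwise. Let $\alpha=\{a_1,a_2,a_3\}$ be an optimal set of three-means for $P$ with $a_1<a_2<a_3$. Then $a_1=\frac16$, $a_2=\frac{13}{18}$, $a_3=\frac{17}{18}$, and the corresponding quantization error is $V_3=\frac{29}{5508}$.
   Context: $\mathbb{N}=\{1,2,\dots\}$. For $n\in\mathbb{N}$, the $n$th quantization error of $P$ is $V_n=\inf\{\int\min_{a\in\alpha}(x-a)^2\,dP(x):\alpha\subset\mathbb{R},\ \mathrm{card}(\alpha)\le n\}$, and an optimal set of $n$-means is a set $\alpha$ with $\mathrm{card}(\alpha)\le n$ attaining this infimum. *)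

From HB Require Import structures.
From mathcomp Require Import all_boot all_order all_algebra finmap.
From mathcomp Require Import all_classical all_reals all_analysis.
Set Implicit Arguments. Unset Strict Implicit. Unset Printing Implicit Defensive.
Import Order.TTheory GRing.Theory Num.Theory.
Local Open Scope classical_set_scope.
Local Open Scope ring_scope.
Local Open Scope fset_scope.

Section Quant.
Variable R : realType.

Definition J (n : nat) : set R :=
  `[1 - (3 ^+ n.-1)^-1, 1 - 2 / 3 ^+ n]%classic.

(* density f(x) = (3/2)^n on J_n (n >= 1), 0 elsewhere; the J_n are
   pairwise disjoint, so this series has at most one nonzero term *)
Definition dens (x : R) : \bar R :=
  (\sum_(1 <= n <oo) (((3 / 2) ^+ n * \1_(J n) x)%:E))%E.

(* min_{a in beta} (x - a)^2  (+oo if beta is empty) *)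
Definition mindist (beta : {fset R}) (x : R) : \bar R :=
  \big[Order.min/+oo%E]_(a <- beta) (((x - a) ^+ 2)%:E).

Definition cost (beta : {fset R}) : \bar R :=
  (\int[@lebesgue_measure R]_x (dens x * mindist beta x))%E.

Definition V (n : nat) : \bar R :=
  ereal_inf [set cost beta | beta in [set beta : {fset R} | (#|` beta| <= n)%N]].

Definition optimal_set (n : nat) (alpha : {fset R}) : Prop :=
  (#|` alpha| <= n)%N /\ cost alpha = V n.

End Quant.

(* Cutting the line into the cells [J n], the cost of a set of centres is the sum
   over n of (3/2)^n times the integral over [J n] of the squared distance to
   the nearest centre. On a piece of a cell where a single point c is known to be
   no farther than every centre, this integral is bounded below by the explicit
   cubic [moment2] of the piece about c, and over the cells [J n], n >= 3, these
   bounds telescope. Sorting the centres and comparing them with 1/2 (which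
   separates [J 1] from the rest of the support), a case analysis shows that any
   three centres cost at least 1/216 + 1/3888 + 25/66096 = 29/5508, the value
   reached exactly by the centroids 1/6 of [J 1], 13/18 of [J 2] and 17/18 of
   the part of the support in [[8/9, 1]]. *)

From HB Require Import structures.
From mathcomp Require Import all_boot all_order all_algebra finmap.
From mathcomp Require Import all_classical all_reals all_analysis.
From mathcomp Require Import ring lra zify.
Import Order.TTheory GRing.Theory Num.Theory.
Import numFieldNormedType.Exports measurable_realfun.
Local Open Scope ring_scope.

Section second_moment.
Context {R : realType}.
Local Notation mu := (@lebesgue_measure R).
Local Open Scope classical_set_scope.

Definition moment2 (l r c : R) : R := ((r - c) ^+ 3 - (l - c) ^+ 3) / 3.

Lemma moment2E l r c :
  moment2 l r c = (r - l) * ((c - (l + r) / 2) ^+ 2 + (r - l) ^+ 2 / 12).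
Proof. by rewrite /moment2; field. Qed.

Lemma moment2_ge0 l r c : l <= r -> 0 <= moment2 l r c.
Proof.
move=> lr; rewrite moment2E mulr_ge0 ?subr_ge0 // addr_ge0 ?sqr_ge0 //.
by rewrite divr_ge0 ?sqr_ge0.
Qed.

Lemma continuous_sqr_dist (c : R) : continuous (fun x : R => (x - c) ^+ 2).
Proof.
move=> x; apply: (continuous_comp (f := fun y => y - c) (g := (@GRing.exp R)^~ 2)).
  by apply: cvgB; [exact: cvg_id | exact: cvg_cst].
exact: exprn_continuous.
Qed.

Lemma is_derive_cube_div3 (c x : R) :
  is_derive x 1 (fun y : R => (y - c) ^+ 3 / 3) ((x - c) ^+ 2).
Proof. by apply: is_derive_eq; rewrite !scaler0 !subr0 /GRing.scale /=; field. Qed.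

Lemma integral_sqr_dist (l r c : R) : l < r ->
  (\int[mu]_(x in `[l, r]) ((x - c) ^+ 2)%:E = (moment2 l r c)%:E)%E.
Proof.
move=> lr; have cube_derive x := is_derive_cube_div3 c x.
have cF : continuous (fun y : R => (y - c) ^+ 3 / 3).
  move=> x; apply: differentiable_continuous; apply/derivable1_diffP.
  exact: ex_derive.
rewrite (@continuous_FTC2 _ _ (fun y : R => (y - c) ^+ 3 / 3)) //.
- by rewrite /moment2 -EFinB mulrBl.
- by apply: continuous_subspaceT; exact: continuous_sqr_dist.
- split; first by move=> x _; exact: ex_derive.
  + by apply: cvg_at_right_filter; exact: cF.
  + by apply: cvg_at_left_filter; exact: cF.
- by move=> x _; rewrite derive1E derive_val.
Qed.

Lemma continuous_measurable_EFin (g : R -> R) (D : set R) :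
  continuous g -> measurable D -> measurable_fun D (fun x => (g x)%:E).
Proof.
move=> cg mD; apply: measurableT_comp => //.
exact: measurable_funS (continuous_measurable_fun cg).
Qed.

Lemma moment2_le_integral (g : R -> R) (l r c : R) : continuous g -> l < r ->
  (forall x, l <= x -> x <= r -> (x - c) ^+ 2 <= g x) ->
  ((moment2 l r c)%:E <= \int[mu]_(x in `[l, r]) (g x)%:E)%E.
Proof.
move=> cg lr H; rewrite -integral_sqr_dist //.
apply: ge0_le_integral => //.
- by move=> x _; rewrite lee_fin sqr_ge0.
- exact: continuous_measurable_EFin (continuous_sqr_dist c) (measurable_itv _).
- exact: continuous_measurable_EFin.
- by move=> x; rewrite /= in_itv /= => /andP[? ?]; rewrite lee_fin H.
Qed.

Lemma integral_le_moment2 (g : R -> R) (l r c : R) : continuous g -> l < r ->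
  (forall x, 0 <= g x) -> (forall x, l <= x -> x <= r -> g x <= (x - c) ^+ 2) ->
  (\int[mu]_(x in `[l, r]) (g x)%:E <= (moment2 l r c)%:E)%E.
Proof.
move=> cg lr g0 H; rewrite -integral_sqr_dist //.
apply: ge0_le_integral => //.
- by move=> x _; rewrite lee_fin.
- exact: continuous_measurable_EFin.
- exact: continuous_measurable_EFin (continuous_sqr_dist c) (measurable_itv _).
- by move=> x; rewrite /= in_itv /= => /andP[? ?]; rewrite lee_fin H.
Qed.

Lemma integral_itv_split (g : R -> R) (l u r : R) :
  continuous g -> l <= u -> u <= r ->
  (\int[mu]_(x in `[l, r]) (g x)%:E =
   \int[mu]_(x in `[l, u]) (g x)%:E + \int[mu]_(x in `[u, r]) (g x)%:E)%E.
Proof.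
move=> cg lu ur.
rewrite (@itv_bndbnd_setU _ _ (BLeft l) (BRight u) (BRight r)) ?bnd_simp //.
rewrite integral_setU //=.
- by rewrite integral_itv_obnd_cbnd //; exact: continuous_measurable_EFin.
- apply: continuous_measurable_EFin cg _.
  exact: measurableU (measurable_itv _) (measurable_itv _).
- apply/disj_setPS => x [] /=; rewrite !in_itv /= => /andP[_ xu] /andP[ux _].
  by move: (lt_le_trans ux xu); rewrite ltxx.
Qed.

End second_moment.

Section density.
Context {R : realType}.
Local Notation mu := (@lebesgue_measure R).
Local Open Scope classical_set_scope.

Definition Jweight (n : nat) : R := (3 / 2) ^+ n.
Definition Jlo (n : nat) : R := 1 - (3 ^+ n.-1)^-1.
Definition Jhi (n : nat) : R := 1 - 2 / 3 ^+ n.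

Definition Jcell (g : R -> R) (n : nat) : \bar R :=
  ((Jweight n)%:E * \int[mu]_(x in J n) (g x)%:E)%E.

Definition Jtail (g : R -> R) : \bar R := (\sum_(3 <= n <oo) Jcell g n)%E.

Lemma JE n : J n = `[Jlo n, Jhi n].
Proof. by []. Qed.

Lemma J0 : J 0 = set0 :> set R.
Proof.
rewrite JE set_itv_ge // /Jlo /Jhi /= bnd_simp expr0 invr1 -ltNge; lra.
Qed.

Lemma Jweight_ge0 n : 0 <= Jweight n.
Proof. by rewrite exprn_ge0 // divr_ge0. Qed.

Lemma Jlo_lt_Jhi n : (0 < n)%N -> Jlo n < Jhi n.
Proof.
case: n => // k _; rewrite /Jlo /Jhi /= exprS invrM ?unitfE ?expf_neq0 //.
have : 0 < (3 ^+ k)^-1 :> R by rewrite invr_gt0 exprn_gt0.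
lra.
Qed.

Lemma Jlo_ge n : (3 <= n)%N -> 8 / 9 <= Jlo n.
Proof.
move=> n3; rewrite /Jlo.
have -> : 8 / 9 = 1 - ((3 : R) ^+ 2)^-1 by rewrite expr2; field.
rewrite lerD2l lerN2 lef_pV2 ?posrE ?exprn_gt0 //.
by rewrite ler_weXn2l //; [lra | lia].
Qed.

Lemma Jhi_le1 n : Jhi n <= 1.
Proof. by rewrite /Jhi gerBl divr_ge0 ?exprn_ge0. Qed.

Lemma Jlo1 : Jlo 1 = 0. Proof. by rewrite /Jlo expr0 invr1 subrr. Qed.
Lemma Jhi1 : Jhi 1 = 1 / 3. Proof. by rewrite /Jhi expr1; field. Qed.
Lemma Jlo2 : Jlo 2 = 2 / 3. Proof. by rewrite /Jlo expr1; field. Qed.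
Lemma Jhi2 : Jhi 2 = 7 / 9. Proof. by rewrite /Jhi expr2; field. Qed.
Lemma Jlo3 : Jlo 3 = 8 / 9. Proof. by rewrite /Jlo expr2; field. Qed.
Lemma Jhi3 : Jhi 3 = 25 / 27. Proof. by rewrite /Jhi !exprS expr0; field. Qed.
Lemma Jweight1 : Jweight 1 = 3 / 2. Proof. by rewrite /Jweight expr1. Qed.
Lemma Jweight2 : Jweight 2 = 9 / 4. Proof. by rewrite /Jweight expr2; field. Qed.
Lemma Jweight3 : Jweight 3 = 27 / 8.
Proof. by rewrite /Jweight !exprS expr0; field. Qed.

Lemma dens_ge0 (x : R) : (0 <= dens x)%E.
Proof.
apply: nneseries_ge0 => n _ _.
by rewrite lee_fin mulr_ge0 ?Jweight_ge0.
Qed.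

Lemma Jcell_ge0 g n : (forall x, 0 <= g x) -> (0 <= Jcell g n)%E.
Proof.
move=> g0; apply: mule_ge0; first by rewrite lee_fin Jweight_ge0.
by apply: integral_ge0 => x _; rewrite lee_fin.
Qed.

Lemma Jcell0 g : Jcell g 0 = 0%E.
Proof. by rewrite /Jcell J0 integral_set0 mule0. Qed.

Lemma Jtail_ge0 g : (forall x, 0 <= g x) -> (0 <= Jtail g)%E.
Proof. by move=> g0; apply: nneseries_ge0 => n _ _; exact: Jcell_ge0. Qed.

Lemma Jcell3_le_Jtail g : (forall x, 0 <= g x) -> (Jcell g 3 <= Jtail g)%E.
Proof.
move=> g0; rewrite /Jtail (@nneseries_split _ _ 3 1) ?big_nat1; last first.
  by move=> k _; exact: Jcell_ge0.
by rewrite leeDl //; apply: nneseries_ge0 => n _ _; exact: Jcell_ge0.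
Qed.

Lemma integral_dens (g : R -> R) : continuous g -> (forall x, 0 <= g x) ->
  (\int[mu]_x (dens x * (g x)%:E) = \sum_(n <oo) Jcell g n)%E.
Proof.
move=> cg g0.
have densgE x : (dens x * (g x)%:E =
    \sum_(n <oo) ((Jweight n * \1_(J n) x * g x)%:E))%E.
  rewrite muleC /dens -nneseriesZl; last first.
    by move=> i _; rewrite lee_fin mulr_ge0 ?Jweight_ge0.
  rewrite (@nneseries_split _ _ 0 1); last first.
    by move=> k _; rewrite lee_fin !mulr_ge0 ?Jweight_ge0.
  rewrite add0n big_nat1 J0 indic0 mulr0 mul0r add0e.
  by apply: eq_eseriesr => n _; rewrite -EFinM /Jweight; congr (_%:E); ring.
under eq_integral do rewrite densgE.
rewrite integral_nneseries //; last first.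
- by move=> n x _; rewrite lee_fin !mulr_ge0 ?Jweight_ge0.
- move=> n; apply/measurable_EFinP.
  apply: measurable_funM; last exact: continuous_measurable_fun.
  by apply: measurable_funM => //; apply: measurable_indic; exact: measurable_itv.
apply: eq_eseriesr => n _.
rewrite /Jcell integral_mkcond [X in (_ * X)%E]integral_mkcond.
rewrite -ge0_integralZl_EFin //.
- apply: eq_integral => x _; rewrite !patchE indicE mem_setT.
  case: (x \in J n) => /=; first by rewrite mulr1 EFinM.
  by rewrite mulr0 mul0r mule0.
- by move=> x _; rewrite patchE; case: ifP => // _; rewrite lee_fin.
- apply/(measurable_restrictT _ _).1; first exact: measurable_itv.
  by apply: continuous_measurable_EFin => //; exact: measurable_itv.
- exact: Jweight_ge0.
Qed.

Lemma integral_dens_split (g : R -> R) : continuous g -> (forall x, 0 <= g x) ->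
  (\int[mu]_x (dens x * (g x)%:E) = Jcell g 1 + (Jcell g 2 + Jtail g))%E.
Proof.
move=> cg g0; rewrite integral_dens // (@nneseries_split _ _ 0 3); last first.
  by move=> k _; exact: Jcell_ge0.
by rewrite add0n big_mkord !big_ord_recl big_ord0 /= Jcell0 adde0 add0e addeA.
Qed.

Lemma Jcell_ge_moment2 (g : R -> R) n (c : R) : continuous g -> (0 < n)%N ->
  (forall x, Jlo n <= x -> x <= Jhi n -> (x - c) ^+ 2 <= g x) ->
  ((Jweight n * moment2 (Jlo n) (Jhi n) c)%:E <= Jcell g n)%E.
Proof.
move=> cg n0 H; rewrite EFinM lee_wpmul2l ?lee_fin ?Jweight_ge0 //.
by apply: moment2_le_integral => //; exact: Jlo_lt_Jhi.
Qed.

Lemma Jcell_le_moment2 (g : R -> R) n (c : R) : continuous g -> (0 < n)%N ->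
  (forall x, 0 <= g x) ->
  (forall x, Jlo n <= x -> x <= Jhi n -> g x <= (x - c) ^+ 2) ->
  (Jcell g n <= (Jweight n * moment2 (Jlo n) (Jhi n) c)%:E)%E.
Proof.
move=> cg n0 g0 H; rewrite EFinM lee_wpmul2l ?lee_fin ?Jweight_ge0 //.
by apply: integral_le_moment2 => //; exact: Jlo_lt_Jhi.
Qed.

Lemma Jcell_ge_moment2_split (g : R -> R) n (u c1 c2 : R) : continuous g ->
  Jlo n < u -> u < Jhi n ->
  (forall x, Jlo n <= x -> x <= u -> (x - c1) ^+ 2 <= g x) ->
  (forall x, u <= x -> x <= Jhi n -> (x - c2) ^+ 2 <= g x) ->
  ((Jweight n * (moment2 (Jlo n) u c1 + moment2 u (Jhi n) c2))%:E
     <= Jcell g n)%E.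
Proof.
move=> cg lu uh H1 H2; rewrite EFinM lee_wpmul2l ?lee_fin ?Jweight_ge0 //.
rewrite JE (integral_itv_split g _ _ _ cg (ltW lu) (ltW uh)) EFinD.
by apply: leeD; apply: moment2_le_integral.
Qed.

End density.

Section tail.
Context {R : realType}.
Local Open Scope classical_set_scope.

(* Closed form of [\sum_(n >= N) Jweight n * moment2 (Jlo n) (Jhi n) c]: in the
   variable [1 - x] the cell [J n] is [[2/3^n, 3/3^n]], so the n-th term is a
   combination of [2^-n], [6^-n] and [18^-n]. *)
Definition tail_moment2 (c : R) (N : nat) : R :=
  2 * (1 - c) ^+ 2 / 2 ^+ N - 6 * (1 - c) / 6 ^+ N + (114 / 17) / 18 ^+ N.

Lemma Jweight_moment2_telescope n c : (0 < n)%N ->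
  Jweight n * moment2 (Jlo n) (Jhi n) c = tail_moment2 c n - tail_moment2 c n.+1.
Proof.
case: n => // k _; rewrite /Jweight /moment2 /Jlo /Jhi /tail_moment2 /=.
have e6 : (6 : R) ^+ k = 2 ^+ k * 3 ^+ k by rewrite -exprMn; congr (_ ^+ _); ring.
have e18 : (18 : R) ^+ k = 2 ^+ k * 3 ^+ k * 3 ^+ k.
  by rewrite -!exprMn; congr (_ ^+ _); ring.
rewrite !exprS e6 e18 expr_div_n.
have t0 : (3 : R) ^+ k != 0 by rewrite expf_neq0 // pnatr_eq0.
have s0 : (2 : R) ^+ k != 0 by rewrite expf_neq0 // pnatr_eq0.
by field; rewrite t0 s0.
Qed.

Lemma tail_moment2_cvg0 c : tail_moment2 c N @[N --> \oo] --> 0.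
Proof.
have -> : tail_moment2 c = (fun N => geometric (2 * (1 - c) ^+ 2) 2^-1 N
    - geometric (6 * (1 - c)) 6^-1 N + geometric (114 / 17) 18^-1 N).
  by apply/funext => N; rewrite /geometric /tail_moment2 /= !exprVn.
have geo0 (a q : R) : 1 < q -> geometric a q^-1 n @[n --> \oo] --> 0.
  by move=> q1; apply: cvg_geometric; rewrite ger0_norm ?invf_lt1 ?invr_ge0; lra.
have := cvgD (cvgB (geo0 (2 * (1 - c) ^+ 2) 2 (ltr1n _ _))
  (geo0 (6 * (1 - c)) 6 (ltr1n _ _))) (geo0 (114 / 17) 18 (ltr1n _ _)).
by rewrite subrr addr0; apply.
Qed.

Lemma tail_moment2_series c :
  (\sum_(3 <= n <oo) ((Jweight n * moment2 (Jlo n) (Jhi n) c)%:E) =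
   (tail_moment2 c 3)%:E)%E.
Proof.
have partial_sum N : (3 <= N)%N ->
    (\sum_(3 <= n < N) ((Jweight n * moment2 (Jlo n) (Jhi n) c)%:E) =
     (tail_moment2 c 3 - tail_moment2 c N)%:E)%E.
  move=> N3; rewrite sumEFin; congr (_%:E).
  rewrite (telescope_sumr_eq (fun n => - tail_moment2 c n)) //; first by ring.
  move=> k /andP[k3 _]; rewrite Jweight_moment2_telescope; first by ring.
  exact: leq_trans k3.
have partial_sum_cvg :
    (tail_moment2 c 3 - tail_moment2 c N)%:E @[N --> \oo] --> (tail_moment2 c 3)%:E.
  apply: cvg_EFin; first by near=> N.
  rewrite -[X in _ --> X]subr0.
  by apply: cvgB; [exact: cvg_cst | exact: tail_moment2_cvg0].
apply: cvg_lim => //; apply: cvg_trans partial_sum_cvg.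
apply: near_eq_cvg; near=> N; rewrite partial_sum //.
by near: N; exact: nbhs_infty_ge.
Unshelve. all: by end_near.
Qed.

Lemma tail_moment2_3 c :
  tail_moment2 c 3 = 25 / (16 * 243 * 17) + (c - 17 / 18) ^+ 2 / 4.
Proof. by rewrite /tail_moment2 !exprS expr0; field. Qed.

Lemma Jtail_ge (g : R -> R) (c : R) : continuous g ->
  (forall x, 8 / 9 <= x -> x <= 1 -> (x - c) ^+ 2 <= g x) ->
  ((tail_moment2 c 3)%:E <= Jtail g)%E.
Proof.
move=> cg H; rewrite -tail_moment2_series /Jtail.
rewrite eseries_cond [X in (_ <= X)%E]eseries_cond.
apply: lee_nneseries => [n _ /= n3|n /= n3].
  rewrite lee_fin mulr_ge0 ?Jweight_ge0 // moment2_ge0 // ltW // Jlo_lt_Jhi //.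
  exact: leq_trans n3.
apply: Jcell_ge_moment2 => // [|x lo_x x_hi]; first exact: leq_trans n3.
by apply: H; [exact: le_trans (Jlo_ge _ n3) lo_x | exact: le_trans x_hi (Jhi_le1 n)].
Qed.

Lemma Jtail_le (g : R -> R) (c : R) : continuous g -> (forall x, 0 <= g x) ->
  (forall x, 8 / 9 <= x -> x <= 1 -> g x <= (x - c) ^+ 2) ->
  (Jtail g <= (tail_moment2 c 3)%:E)%E.
Proof.
move=> cg g0 H; rewrite -tail_moment2_series /Jtail.
rewrite eseries_cond [X in (_ <= X)%E]eseries_cond.
apply: lee_nneseries => [n _ _|n /= n3]; first exact: Jcell_ge0.
apply: Jcell_le_moment2 => // [|x lo_x x_hi]; first exact: leq_trans n3.
by apply: H; [exact: le_trans (Jlo_ge _ n3) lo_x | exact: le_trans x_hi (Jhi_le1 n)].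
Qed.

End tail.

Section first_cells.
Context {R : realType}.

Lemma Jcell1_ge (g : R -> R) c : continuous g ->
  (forall x, 0 <= x -> x <= 1 / 3 -> (x - c) ^+ 2 <= g x) ->
  ((1 / 216 + (c - 1 / 6) ^+ 2 / 2)%:E <= Jcell g 1)%E.
Proof.
move=> cg H; have := @Jcell_ge_moment2 _ g 1 c cg isT.
rewrite Jlo1 Jhi1 Jweight1 /moment2.
have -> : 3 / 2 * (((1 / 3 - c) ^+ 3 - (0 - c) ^+ 3) / 3) =
  1 / 216 + (c - 1 / 6) ^+ 2 / 2 :> R by field.
exact.
Qed.

Lemma Jcell2_ge (g : R -> R) c : continuous g ->
  (forall x, 2 / 3 <= x -> x <= 7 / 9 -> (x - c) ^+ 2 <= g x) ->
  ((1 / (16 * 243) + (c - 13 / 18) ^+ 2 / 4)%:E <= Jcell g 2)%E.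
Proof.
move=> cg H; have := @Jcell_ge_moment2 _ g 2 c cg isT.
rewrite Jlo2 Jhi2 Jweight2 /moment2.
have -> : 9 / 4 * (((7 / 9 - c) ^+ 3 - (2 / 3 - c) ^+ 3) / 3) =
  1 / (16 * 243) + (c - 13 / 18) ^+ 2 / 4 :> R by field.
exact.
Qed.

Lemma Jcell3_ge (g : R -> R) : continuous g ->
  (forall x, 8 / 9 <= x -> x <= 25 / 27 -> (x - 1) ^+ 2 <= g x) ->
  ((19 / (8 * 2187))%:E <= Jcell g 3)%E.
Proof.
move=> cg H; have := @Jcell_ge_moment2 _ g 3 1 cg isT.
rewrite Jlo3 Jhi3 Jweight3 /moment2.
have -> : 27 / 8 * (((25 / 27 - 1) ^+ 3 - (8 / 9 - 1) ^+ 3) / 3) =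
  19 / (8 * 2187) :> R by field.
exact.
Qed.

End first_cells.

Section squares.
Context {R : realFieldType}.

Lemma sqr_subr_le0 (a b : R) : (a - b) ^+ 2 <= 0 -> a = b.
Proof.
by move=> h; apply/eqP; rewrite -subr_eq0 -sqrf_eq0 eq_le h sqr_ge0.
Qed.

Lemma sqr_dist_le_above_mid (x b c : R) :
  b <= c -> b + c <= 2 * x -> (x - c) ^+ 2 <= (x - b) ^+ 2.
Proof.
move=> bc bcx; rewrite -subr_ge0.
have -> : (x - b) ^+ 2 - (x - c) ^+ 2 = (c - b) * (2 * x - b - c) by ring.
by apply: mulr_ge0; lra.
Qed.

Lemma sqr_dist_le_below_mid (x b c : R) :
  c <= b -> 2 * x <= b + c -> (x - c) ^+ 2 <= (x - b) ^+ 2.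
Proof.
move=> cb bcx; rewrite -subr_ge0.
have -> : (x - b) ^+ 2 - (x - c) ^+ 2 = (b - c) * (b + c - 2 * x) by ring.
by apply: mulr_ge0; lra.
Qed.

End squares.

Section nearest_center.
Context {R : realType}.

Definition mindist3 (b1 b2 b3 x : R) : R :=
  Num.min ((x - b1) ^+ 2) (Num.min ((x - b2) ^+ 2) ((x - b3) ^+ 2)).

Lemma continuous_mindist3 b1 b2 b3 : continuous (mindist3 b1 b2 b3).
Proof. by do 2?apply: min_fun_continuous; exact: continuous_sqr_dist. Qed.

Lemma mindist3_ge0 b1 b2 b3 x : 0 <= mindist3 b1 b2 b3 x.
Proof. by rewrite !le_min !sqr_ge0. Qed.

Lemma mindist3_le1 b1 b2 b3 x : mindist3 b1 b2 b3 x <= (x - b1) ^+ 2.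
Proof. by rewrite ge_min lexx. Qed.

Lemma mindist3_le2 b1 b2 b3 x : mindist3 b1 b2 b3 x <= (x - b2) ^+ 2.
Proof. by rewrite !ge_min lexx orbT. Qed.

Lemma mindist3_le3 b1 b2 b3 x : mindist3 b1 b2 b3 x <= (x - b3) ^+ 2.
Proof. by rewrite !ge_min lexx !orbT. Qed.

Lemma le_mindist3 b1 b2 b3 x c :
  (x - c) ^+ 2 <= (x - b1) ^+ 2 -> (x - c) ^+ 2 <= (x - b2) ^+ 2 ->
  (x - c) ^+ 2 <= (x - b3) ^+ 2 -> (x - c) ^+ 2 <= mindist3 b1 b2 b3 x.
Proof. by move=> h1 h2 h3; rewrite !le_min h1 h2 h3. Qed.

End nearest_center.

(* Closes [forall x, l <= x -> x <= r -> (x - c) ^+ 2 <= mindist3 b1 b2 b3 x]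
   when the position of every such [x] with respect to the midpoints between [c]
   and each [bi] follows linearly from the context. *)
Ltac mindist3_ge :=
  move=> ? ? ?; apply: le_mindist3;
  (first [ exact: lexx
         | (apply: sqr_dist_le_above_mid; lra)
         | (apply: sqr_dist_le_below_mid; lra) ]).

Section sharp_lower_bound.
Context {R : realFieldType}.
Local Open Scope ereal_scope.

Definition sharp_lb (x : \bar R) (v : R) (P : Prop) : Prop :=
  v%:E <= x /\ (x <= v%:E -> P).

Lemma sharp_lb_gt {x : \bar R} {v : R} {P : Prop} : v%:E < x -> sharp_lb x v P.
Proof. by move=> vx; split=> [|/(lt_le_trans vx)]; rewrite ?ltxx ?ltW. Qed.

Lemma sharp_lb_fin {x : \bar R} {a v : R} {P : Prop} :
  a%:E <= x -> (v <= a)%R -> ((a <= v)%R -> P) -> sharp_lb x v P.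
Proof.
move=> ax va aP; split; first by apply: le_trans ax; rewrite lee_fin.
by move=> xv; apply: aP; rewrite -lee_fin (le_trans ax xv).
Qed.

Lemma sharp_lbW {x : \bar R} {v : R} {P Q : Prop} :
  (P -> Q) -> sharp_lb x v P -> sharp_lb x v Q.
Proof. by move=> PQ [vx xP]; split=> // /xP. Qed.

Lemma sharp_lbD {x y : \bar R} {a b : R} {P Q : Prop} :
  sharp_lb x a P -> sharp_lb y b Q -> sharp_lb (x + y) (a + b)%R (P /\ Q).
Proof.
move=> [ax xP] [by_ yQ]; split; first by rewrite EFinD leeD.
case: x ax xP => [x||] //; case: y by_ yQ => [y||] //.
rewrite -EFinD !lee_fin => by_ yQ ax xP xy.
by split; [apply: xP | apply: yQ]; lra.
Qed.

Lemma lte_fin_leeD {x y : \bar R} {a b v : R} :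
  a%:E <= x -> b%:E <= y -> (v < a + b)%R -> v%:E < x + y.
Proof.
by move=> ax by_ vab; rewrite (lt_le_trans _ (leeD ax by_)) // -EFinD lte_fin.
Qed.

End sharp_lower_bound.

(* The costs of [J 1] about 1/6 and of [[2/3, 1]] about 13/18 and 17/18. *)
Definition err_left {R : realType} : R := 1 / 216.
Definition err_right {R : realType} : R := 1 / (16 * 243) + 25 / (16 * 243 * 17).

Section three_centers.
Context {R : realType}.
Context {b1 b2 b3 : R}.
Local Notation g := (mindist3 b1 b2 b3).
Let cg : continuous g := continuous_mindist3 b1 b2 b3.
Let g0 : forall x, 0 <= g x := mindist3_ge0 b1 b2 b3.

Lemma Jcell1_gt : b1 <= b2 -> b2 <= b3 -> 1 / 2 < b1 ->
  ((err_left + err_right)%:E < Jcell g 1)%E.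
Proof.
move=> b12 b23 b1_gt; apply: lt_le_trans (Jcell1_ge _ (1 / 2) cg _).
  by rewrite lte_fin /err_left /err_right; lra.
by mindist3_ge.
Qed.

Lemma Jcell2_gt : b1 <= b2 -> b2 <= b3 -> b3 <= 1 / 2 ->
  ((err_left + err_right)%:E < Jcell g 2)%E.
Proof.
move=> b12 b23 b3_le; apply: lt_le_trans (Jcell2_ge _ (1 / 2) cg _).
  by rewrite lte_fin /err_left /err_right; lra.
by mindist3_ge.
Qed.

Lemma Jcell1_sharp : b1 <= b2 -> b2 <= b3 -> 1 / 2 < b2 ->
  sharp_lb (Jcell g 1) err_left (b1 = 1 / 6).
Proof.
move=> b12 b23 b2_gt; rewrite /err_left.
have [b1_ge|b1_lt] := leP (1 / 6) b1.
  apply: (sharp_lb_fin (Jcell1_ge _ b1 cg _)).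
  - by mindist3_ge.
  - by have := sqr_ge0 (b1 - 1 / 6); lra.
  - by move=> h; apply: sqr_subr_le0; have := sqr_ge0 (b1 - 1 / 6); lra.
have [b1_le|b1_gt] := leP b1 (- 1 / 2).
  apply: (sharp_lb_fin (Jcell1_ge _ (1 / 2) cg _)).
  - by mindist3_ge.
  - by lra.
  - by move=> h; exfalso; lra.
pose u := (b1 + 1 / 2) / 2.
(* right of [u], no centre is closer than [1/2] *)
have lb : ((3 / 2 * (moment2 0 u b1 + moment2 u (1 / 3) (1 / 2)))%:E
    <= Jcell g 1)%E.
  have := @Jcell_ge_moment2_split _ g 1 u b1 (1 / 2) cg.
  rewrite Jlo1 Jhi1 Jweight1; apply; rewrite /u.
  - by lra.
  - by lra.
  - by mindist3_ge.
  - by mindist3_ge.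
have lbE : 3 / 2 * (moment2 0 u b1 + moment2 u (1 / 3) (1 / 2)) =
    1 / 216 + 3 / 8 * ((1 / 6 - b1) ^+ 2 * (1 - (1 / 6 - b1))).
  by rewrite /moment2 /u; field.
rewrite lbE in lb.
have : 0 < (1 / 6 - b1) ^+ 2 * (1 - (1 / 6 - b1)).
  by apply: mulr_gt0; [rewrite exprn_gt0 //; lra | lra].
by move=> pos; apply: (sharp_lb_fin lb); [lra | move=> h; exfalso; lra].
Qed.

Lemma Jcell2_tail_gt : b1 <= b2 -> b2 <= 1 / 2 -> 1 / 2 < b3 ->
  ((err_left + err_right)%:E < Jcell g 2 + Jtail g)%E.
Proof.
move=> b12 b2_le b3_gt; rewrite /err_left /err_right.
have [b3_ge|b3_lt] := leP (19 / 18) b3.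
  apply: lte_fin_leeD (Jcell2_ge _ (1 / 2) cg _) (Jtail_ge0 _ g0) _.
    by mindist3_ge.
  by lra.
have tail_ge := Jtail_ge _ b3 cg _; rewrite tail_moment2_3 in tail_ge.
have [b3_le|b3_gt'] := leP b3 (5 / 6).
  apply: lte_fin_leeD (Jcell2_ge _ b3 cg _) (tail_ge _) _; try by mindist3_ge.
  (* [(y - p)^2 + (y - q)^2 = 2 (y - (p + q) / 2)^2 + (p - q)^2 / 2] *)
  by have := sqr_ge0 (b3 - 15 / 18); lra.
pose u := (1 / 2 + b3) / 2.
have lb : ((9 / 4 * (moment2 (2 / 3) u (1 / 2) + moment2 u (7 / 9) b3))%:E
    <= Jcell g 2)%E.
  have := @Jcell_ge_moment2_split _ g 2 u (1 / 2) b3 cg.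
  rewrite Jlo2 Jhi2 Jweight2; apply; rewrite /u.
  - by lra.
  - by lra.
  - by mindist3_ge.
  - by mindist3_ge.
apply: lte_fin_leeD lb (tail_ge _) _; first by mindist3_ge.
pose t := b3 - 5 / 6.
have -> : 9 / 4 * (moment2 (2 / 3) u (1 / 2) + moment2 u (7 / 9) b3) +
    (25 / (16 * 243 * 17) + (b3 - 17 / 18) ^+ 2 / 4) =
  1 / 216 + (1 / (16 * 243) + 25 / (16 * 243 * 17)) + 1 / 648 +
  t ^+ 2 * (5 / 16 - 9 / 16 * t) by rewrite /t /u /moment2; field.
have : 0 <= t ^+ 2 * (5 / 16 - 9 / 16 * t).
  by apply: mulr_ge0; [exact: sqr_ge0 | rewrite /t; lra].
lra.
Qed.

Lemma Jcell2_tail_sharp : b1 <= 1 / 2 -> 1 / 2 < b2 -> b2 <= b3 ->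
  sharp_lb (Jcell g 2 + Jtail g) err_right (b2 = 13 / 18 /\ b3 = 17 / 18).
Proof.
move=> b1_le b2_gt b23; rewrite /err_right.
have cell2_ge := Jcell2_ge _ _ cg; have tail_ge := Jtail_ge _ _ cg.
have [b2_ge|b2_lt] := leP (5 / 6) b2.
  apply/sharp_lb_gt/(lte_fin_leeD (cell2_ge (5 / 6) _) (Jtail_ge0 _ g0)).
    by mindist3_ge.
  by lra.
have [b23_le|b23_gt] := leP (b2 + b3) (16 / 9).
  have [b23_ge|b23_lt] := leP (14 / 9) (b2 + b3).
    apply: sharp_lbD.
      apply: sharp_lb_fin (cell2_ge b2 _) _ _; first by mindist3_ge.
        by have := sqr_ge0 (b2 - 13 / 18); lra.
      by move=> h; apply: sqr_subr_le0; have := sqr_ge0 (b2 - 13 / 18); lra.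
    apply: sharp_lb_fin (tail_ge b3 _) _ _; first by mindist3_ge.
      by rewrite tail_moment2_3; have := sqr_ge0 (b3 - 17 / 18); lra.
    rewrite tail_moment2_3 => h.
    by apply: sqr_subr_le0; have := sqr_ge0 (b3 - 17 / 18); lra.
  apply: sharp_lb_gt.
  have [b3_far|b3_near] := leP (1 / 900) ((b3 - 17 / 18) ^+ 2).
    apply: lte_fin_leeD (Jcell_ge0 _ 2 g0) (tail_ge b3 _) _.
      by mindist3_ge.
    by rewrite tail_moment2_3; lra.
  have b3_gt : 41 / 45 < b3 by nra.
  apply: lte_fin_leeD (cell2_ge (29 / 45) _) (tail_ge b3 _) _; try by mindist3_ge.
  by rewrite tail_moment2_3; have := sqr_ge0 (b3 - 17 / 18); lra.
apply: sharp_lb_gt.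
have [b2_ge|b2_lt'] := leP (23 / 30) b2.
  apply: lte_fin_leeD (cell2_ge b2 _) (Jtail_ge0 _ g0) _; first by mindist3_ge.
  have : 4 / (45 * 45) <= (b2 - 13 / 18) ^+ 2 by nra.
  lra.
apply: lte_fin_leeD (Jcell_ge0 _ 2 g0) (le_trans _ (Jcell3_le_Jtail _ g0)) _.
- by apply: Jcell3_ge cg _; mindist3_ge.
- lra.
Qed.

End three_centers.

Local Open Scope fset_scope.

Section cost.
Context {R : realType}.
Local Notation mu := (@lebesgue_measure R).

Lemma le_integral_ge0 (f1 f2 : R -> \bar R) : (forall x, 0 <= f1 x)%E ->
  (forall x, f1 x <= f2 x)%E -> (\int[mu]_x f1 x <= \int[mu]_x f2 x)%E.
Proof.
move=> f1_ge0 f12; have f2_ge0 x : (0 <= f2 x)%E by apply: le_trans (f12 x).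
rewrite !ge0_integralTE //; apply: le_ereal_sup => _ [h hf1 <-].
by exists h => // x; apply: le_trans (hf1 x) (f12 x).
Qed.

Lemma mindist_le_subset (beta gamma : {fset R}) x : {subset beta <= gamma} ->
  (mindist gamma x <= mindist beta x)%E.
Proof.
move=> sub; rewrite /mindist [X in (_ <= X)%E]big_seq.
rewrite le_bigmin ?leey // => a a_beta.
exact: ge_bigmin_seq (sub a a_beta) _.
Qed.

Lemma cost_le_subset {beta gamma : {fset R}} : {subset beta <= gamma} ->
  (cost gamma <= cost beta)%E.
Proof.
move=> sub; apply: le_integral_ge0 => x.
  rewrite mule_ge0 ?dens_ge0 // le_bigmin ?leey // => a _.
  by rewrite lee_fin sqr_ge0.
by rewrite lee_wpmul2l ?dens_ge0 ?mindist_le_subset.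
Qed.

Lemma mindist_fset3 (b1 b2 b3 x : R) :
  mindist [fset b1; b2; b3] x = (mindist3 b1 b2 b3 x)%:E.
Proof.
have mem_b : [/\ b1 \in [fset b1; b2; b3], b2 \in [fset b1; b2; b3]
                & b3 \in [fset b1; b2; b3]] by rewrite !inE !eqxx !orbT.
case: mem_b => b1_in b2_in b3_in.
apply/le_anti/andP; split.
  rewrite /mindist3 !EFin_min !le_min; apply/and3P; split.
  - exact: ge_bigmin_seq b1_in _.
  - exact: ge_bigmin_seq b2_in _.
  - exact: ge_bigmin_seq b3_in _.
rewrite /mindist big_seq le_bigmin ?leey // => a.
rewrite !inE -!orbA => /or3P[] /eqP ->; rewrite lee_fin.
- exact: mindist3_le1.
- exact: mindist3_le2.
- exact: mindist3_le3.
Qed.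

Lemma fset_card_le3_sorted {beta : {fset R}} : (#|` beta| <= 3)%N ->
  exists b1 b2 b3, [/\ b1 <= b2, b2 <= b3 & {subset beta <= [fset b1; b2; b3]}].
Proof.
move=> card_le3.
have s_sorted := sort_sorted (@le_total _ R) (enum_fset beta).
have mem_s a : (a \in beta) = (a \in sort <=%R (enum_fset beta)) by rewrite mem_sort.
have : (size (sort <=%R (enum_fset beta)) <= 3)%N by rewrite size_sort.
move: s_sorted mem_s; case: (sort _ _) => [|x [|y [|z [|? ?]]]] //= s_sorted mem_s _.
- by exists 0, 0, 0; split=> // a; rewrite mem_s.
- by exists x, x, x; split=> // a; rewrite mem_s !inE => ->.
- case/andP: s_sorted => xy _; exists x, y, y; split=> // a.
  by rewrite mem_s !inE => /orP[] ->; rewrite ?orbT.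
- case/and3P: s_sorted => xy yz _; exists x, y, z; split=> // a.
  by rewrite mem_s !inE orbA.
Qed.

End cost.

Section three_means.
Context {R : realType}.

Lemma cost_fset3E (b1 b2 b3 : R) : cost [fset b1; b2; b3] =
  (Jcell (mindist3 b1 b2 b3) 1 +
   (Jcell (mindist3 b1 b2 b3) 2 + Jtail (mindist3 b1 b2 b3)))%E.
Proof.
rewrite -integral_dens_split; [|exact: continuous_mindist3|exact: mindist3_ge0].
by apply: eq_integral => x _; rewrite mindist_fset3.
Qed.

Lemma cost_fset3_sharp {b1 b2 b3 : R} : b1 <= b2 -> b2 <= b3 ->
  sharp_lb (cost [fset b1; b2; b3]) (err_left + err_right)
    [/\ b1 = 1 / 6, b2 = 13 / 18 & b3 = 17 / 18].
Proof.
move=> b12 b23; rewrite cost_fset3E.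
have g0 := mindist3_ge0 b1 b2 b3.
have left_ge0 := Jcell_ge0 _ 1 g0.
have right_ge0 := adde_ge0 (Jcell_ge0 _ 2 g0) (Jtail_ge0 _ g0).
have [b1_gt|b1_le] := ltP (1 / 2) b1.
  apply/sharp_lb_gt/(lt_le_trans (Jcell1_gt b12 b23 b1_gt)).
  exact: leeDl.
have [b3_le|b3_gt] := leP b3 (1 / 2).
  apply/sharp_lb_gt/(lt_le_trans (Jcell2_gt b12 b23 b3_le)).
  exact: le_trans (leeDl _ (Jtail_ge0 _ g0)) (leeDr _ left_ge0).
have [b2_le|b2_gt] := leP b2 (1 / 2).
  by apply/sharp_lb_gt/(lt_le_trans (Jcell2_tail_gt b12 b2_le b3_gt)); exact: leeDr.
have := sharp_lbD (Jcell1_sharp b12 b23 b2_gt) (Jcell2_tail_sharp b1_le b2_gt b23).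
by apply: sharp_lbW => -[-> [-> ->]].
Qed.

Lemma cost_fset3_opt :
  (cost [fset 1 / 6; 13 / 18; 17 / 18]%R <= (err_left + err_right)%:E :> \bar R)%E.
Proof.
set g := mindist3 (1 / 6 : R) (13 / 18) (17 / 18).
have cg : continuous g by exact: continuous_mindist3.
have g0 : forall x, 0 <= g x by exact: mindist3_ge0.
rewrite cost_fset3E /err_left /err_right !EFinD; apply: leeD.
  have := Jcell_le_moment2 g 1 (1 / 6) cg isT g0
    (fun x _ _ => mindist3_le1 _ _ _ x).
  have -> : Jweight 1 * moment2 (Jlo 1) (Jhi 1) (1 / 6) = 1 / 216 :> R.
    by rewrite Jlo1 Jhi1 Jweight1 /moment2; field.
  exact.
apply: leeD.
  have := Jcell_le_moment2 g 2 (13 / 18) cg isT g0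
    (fun x _ _ => mindist3_le2 _ _ _ x).
  have -> : Jweight 2 * moment2 (Jlo 2) (Jhi 2) (13 / 18) = 1 / (16 * 243) :> R.
    by rewrite Jlo2 Jhi2 Jweight2 /moment2; field.
  exact.
have := Jtail_le g (17 / 18) cg g0 (fun x _ _ => mindist3_le3 _ _ _ x).
by rewrite tail_moment2_3 subrr expr0n /= mul0r addr0.
Qed.

Lemma V3E : V R 3 = (err_left + err_right)%:E.
Proof.
apply/le_anti/andP; split.
  apply: ge_ereal_inf; exists (cost [fset 1 / 6; 13 / 18; 17 / 18]%R).
    exists [fset 1 / 6; 13 / 18; 17 / 18]%R => //=.
    by rewrite !cardfsU !cardfs1; lia.
  exact: cost_fset3_opt.
apply: le_ereal_inf_tmp => _ [beta card_le3 <-].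
have [b1 [b2 [b3 [b12 b23 sub]]]] := fset_card_le3_sorted card_le3.
apply: le_trans _ (cost_le_subset sub).
by have [] := cost_fset3_sharp b12 b23.
Qed.

End three_means.

Theorem lemma4p2 (R : realType) (a1 a2 a3 : R) :
  a1 < a2 -> a2 < a3 ->
  optimal_set 3 [fset a1; a2; a3] ->
  [/\ a1 = 1 / 6, a2 = 13 / 18, a3 = 17 / 18 & V R 3 = (29 / 5508)%:E].
Proof.
move=> a12 a23 [_ opt_cost].
have [_ cost_le_opt] := cost_fset3_sharp (ltW a12) (ltW a23).
have [-> -> ->] : [/\ a1 = 1 / 6, a2 = 13 / 18 & a3 = 17 / 18].
  by apply: cost_le_opt; rewrite opt_cost V3E.
by split=> //; rewrite V3E /err_left /err_right; congr (_%:E); field.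
Qed.
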